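(* Let $A\in\mathcal{L}(X)$ have a g-Drazin inverse, and let $B\in\mathcal{L}(Y,X)$, $C\in\mathcal{L}(X,Y)$. If $ABC=0$ and $CBCB=0$, then the operator matrix $\begin{pmatrix}A&B\\ C&0\end{pmatrix}$ on $X\oplus Y$ has a g-Drazin inverse.
   Context: $X,Y$ are complex Banach spaces; $\mathcal{L}(X)$ denotes the Banach algebra of bounded linear operators on $X$, and $\mathcal{L}(Y,X)$ the bounded operators from $Y$ to $X$. An element $a$ of a unital Banach algebra $\mathcal{A}$ is quasinilpotent if $\lim_{n\to\infty}\|a^n\|^{1/n}=0$. An element $a\in\mathcal{A}$ has a g-Drazin (generalized Drazin) inverse if there exists $x\in\mathcal{A}$ with $x=xax$, $ax=xa$, and $a-a^2x$ quasinilpotent; such $x$ is unique and is denoted $a^d$. *)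

From Stdlib Require Import Reals ClassicalEpsilon.
Open Scope R_scope.

Definition Cx : Type := (R * R)%type.
Definition Cadd (a b : Cx) : Cx := (fst a + fst b, snd a + snd b).
Definition Cmul (a b : Cx) : Cx :=
  (fst a * fst b - snd a * snd b, fst a * snd b + snd a * fst b).
Definition Cone : Cx := (1, 0).
Definition Cmod (a : Cx) : R := sqrt (fst a * fst a + snd a * snd a).

Record NormedData := {
  car :> Type;
  vadd : car -> car -> car;
  vzero : car;
  vopp : car -> car;
  vscal : Cx -> car -> car;
  vnorm : car -> R }.

Arguments vadd {n}. Arguments vzero {n}. Arguments vopp {n}.
Arguments vscal {n}. Arguments vnorm {n}.

Definition vsub {V : NormedData} (x y : V) : V := vadd x (vopp y).

Definition is_CBanach (V : NormedData) : Prop :=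
  (forall x y z : V, vadd x (vadd y z) = vadd (vadd x y) z) /\
  (forall x y : V, vadd x y = vadd y x) /\
  (forall x : V, vadd x vzero = x) /\
  (forall x : V, vadd x (vopp x) = vzero) /\
  (forall x : V, vscal Cone x = x) /\
  (forall (a b : Cx) (x : V), vscal (Cmul a b) x = vscal a (vscal b x)) /\
  (forall (a : Cx) (x y : V), vscal a (vadd x y) = vadd (vscal a x) (vscal a y)) /\
  (forall (a b : Cx) (x : V), vscal (Cadd a b) x = vadd (vscal a x) (vscal b x)) /\
  (forall x : V, vnorm x = 0 -> x = vzero) /\
  (forall (a : Cx) (x : V), vnorm (vscal a x) = Cmod a * vnorm x) /\
  (forall x y : V, vnorm (vadd x y) <= vnorm x + vnorm y) /\
  (forall u : nat -> V,
     (forall eps, eps > 0 -> exists N, forall m n, (m >= N)%nat -> (n >= N)%nat ->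
        vnorm (vsub (u m) (u n)) < eps) ->
     exists l : V, forall eps, eps > 0 -> exists N, forall n, (n >= N)%nat ->
        vnorm (vsub (u n) l) < eps).

Record CBanach := { bdata :> NormedData; bax : is_CBanach bdata }.

Definition bounded_linear {V W : NormedData} (T : V -> W) : Prop :=
  (forall x y : V, T (vadd x y) = vadd (T x) (T y)) /\
  (forall (a : Cx) (x : V), T (vscal a x) = vscal a (T x)) /\
  (exists M, forall x : V, vnorm (T x) <= M * vnorm x).

Definition opnorm {V : NormedData} (T : V -> V) : R :=
  epsilon (inhabits 0)
    (is_lub (fun r => exists v : V, vnorm v <= 1 /\ r = vnorm (T v))).

Definition nroot (r : R) (n : nat) : R :=
  if Rle_dec r 0 then 0 else Rpower r (/ INR n).

Definition quasinilpotent {V : NormedData} (T : V -> V) : Prop :=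
  Un_cv (fun n => nroot (opnorm (fun v => Nat.iter n T v)) n) 0.

Definition has_gDrazin {V : NormedData} (a : V -> V) : Prop :=
  exists x : V -> V, bounded_linear x /\
    (forall v, x (a (x v)) = x v) /\
    (forall v, a (x v) = x (a v)) /\
    quasinilpotent (fun v => vsub (a v) (a (a (x v)))).

Definition prodData (X Y : NormedData) : NormedData := {|
  car := (car X * car Y)%type;
  vadd := fun p q => (vadd (fst p) (fst q), vadd (snd p) (snd q));
  vzero := (vzero, vzero);
  vopp := fun p => (vopp (fst p), vopp (snd p));
  vscal := fun a p => (vscal a (fst p), vscal a (snd p));
  vnorm := fun p => Rmax (vnorm (fst p)) (vnorm (snd p)) |}.

Definition opmatrix {X Y : NormedData} (A : X -> X) (B : Y -> X) (C : X -> Y)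
  : prodData X Y -> prodData X Y :=
  fun p => (vadd (A (fst p)) (B (snd p)), C (fst p)).

(* Quasinilpotence of a bounded operator T is equivalent to a
   uniform sub-geometric decay of its powers: for every eps > 0 there is a
   constant K with ||T^n v|| <= K eps^n ||v||.  We work with this decay
   property throughout and translate back only at the end.

   The theorem then follows from five general constructions of g-Drazin
   inverses, each proved with explicit formulas:
   - if a has inverse x, then a^2 has inverse x^2;
   - if P has inverse D, PQ = 0 and Q^3 = 0, then P + Q has an explicit inverse;
   - if a^2 has inverse e, then a has inverse a e (this uses that a g-Drazin
     inverse commutes with every operator commuting with a);
   - a lower triangular matrix [[S, 0], [A, 0]] inherits an inverse from S;
   - Cline's formula: if V U has inverse y, then U V has inverse U y^2 V.
   Writing M = [[A, B], [C, 0]] = U Vm with U(u, w) = (u, C w) and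
   Vm(u, y) = (A u + B y, u), the operator N = Vm U on X (+) X satisfies
   N^2 = [[A^2 + BC, 0], [A, 0]] + [[0, 0], [0, BC]], which is handled by the
   first, fourth and second constructions; the third gives N and Cline's
   formula gives M. *)

From Stdlib Require Import Reals ClassicalEpsilon Lra Lia FunctionalExtensionality.
Open Scope R_scope.

(* The axioms of a normed complex vector space, as a class so that they are
   found automatically. *)
Class NormedVS (V : NormedData) : Prop := {
  addA : forall x y z : V, vadd x (vadd y z) = vadd (vadd x y) z;
  addC : forall x y : V, vadd x y = vadd y x;
  addr0 : forall x : V, vadd x vzero = x;
  addrN : forall x : V, vadd x (vopp x) = vzero;
  scal1 : forall x : V, vscal Cone x = x;
  scalDl : forall (a b : Cx) (x : V), vscal (Cadd a b) x = vadd (vscal a x) (vscal b x);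
  scalM : forall (a b : Cx) (x : V), vscal (Cmul a b) x = vscal a (vscal b x);
  scalDr : forall (a : Cx) (x y : V), vscal a (vadd x y) = vadd (vscal a x) (vscal a y);
  norm_eq0 : forall x : V, vnorm x = 0 -> x = vzero;
  normZ : forall (a : Cx) (x : V), vnorm (vscal a x) = Cmod a * vnorm x;
  normD : forall x y : V, vnorm (vadd x y) <= vnorm x + vnorm y }.

#[export] Instance CBanach_NormedVS (X : CBanach) : NormedVS X.
Proof.
  destruct X as [d Hd]; simpl.
  destruct Hd as (h1 & h2 & h3 & h4 & h5 & h6 & h7 & h8 & h9 & h10 & h11 & _).
  constructor; auto.
Qed.

Section VectorAlgebra.
Context {V : NormedData} `{NormedVS V}.

Lemma add0r (x : V) : vadd vzero x = x.
Proof. rewrite addC; apply addr0. Qed.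

Lemma addKl (x y : V) : vadd (vopp x) (vadd x y) = y.
Proof. rewrite addA, (addC (vopp x)), addrN, add0r; auto. Qed.

Lemma addI (x y z : V) : vadd x y = vadd x z -> y = z.
Proof. intro E. rewrite <- (addKl x y), E, addKl; auto. Qed.

Lemma opp_unique (x y : V) : vadd x y = vzero -> y = vopp x.
Proof. intro E. apply (addI x). rewrite E, addrN; auto. Qed.

Lemma oppD (x y : V) : vopp (vadd x y) = vadd (vopp x) (vopp y).
Proof.
  symmetry; apply opp_unique.
  rewrite (addC (vopp x)), addA, <- (addA x y), addrN, addr0, addrN; auto.
Qed.

Lemma addCA (a b c : V) : vadd a (vadd b c) = vadd b (vadd a c).
Proof. rewrite !addA, (addC a). auto. Qed.

Lemma subrr (x : V) : vsub x x = vzero.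
Proof. apply addrN. Qed.

Lemma subr0 (x : V) : vsub x vzero = x.
Proof.
  unfold vsub. rewrite <- (opp_unique vzero vzero (addr0 vzero)), addr0; auto.
Qed.

Lemma subrK (a b : V) : vadd (vsub a b) b = a.
Proof. unfold vsub. rewrite <- addA, (addC (vopp b)), addrN, addr0; auto. Qed.

Lemma subr0_eq (x y : V) : vsub x y = vzero -> x = y.
Proof. intro E. rewrite <- (subrK x y), E, add0r; auto. Qed.

Lemma sub_regroup (a b c d e : V) :
  vsub (vadd a b) (vadd c (vadd d e)) = vadd (vsub a c) (vsub (vsub b d) e).
Proof. unfold vsub. rewrite !oppD, <- addA, (addCA b), !addA. auto. Qed.

Lemma scal0 (x : V) : vscal (0, 0) x = vzero.
Proof.
  apply (addI (vscal (0, 0) x)). rewrite addr0, <- scalDl.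
  unfold Cadd; simpl. rewrite Rplus_0_l; auto.
Qed.

Lemma scalN1 (x : V) : vscal (-1, 0) x = vopp x.
Proof.
  apply opp_unique. rewrite <- (scal1 x) at 1. rewrite <- scalDl.
  unfold Cadd, Cone; simpl. replace (1 + -1) with 0 by ring. rewrite Rplus_0_l. apply scal0.
Qed.

Lemma norm0 : vnorm (vzero : V) = 0.
Proof.
  rewrite <- (scal0 vzero), normZ. unfold Cmod; simpl.
  replace (0 * 0 + 0 * 0) with 0 by ring. rewrite sqrt_0; ring.
Qed.

Lemma normN (x : V) : vnorm (vopp x) = vnorm x.
Proof.
  rewrite <- scalN1, normZ. unfold Cmod; simpl.
  replace (-1 * -1 + 0 * 0) with 1 by ring. rewrite sqrt_1; ring.
Qed.

Lemma norm_ge0 (x : V) : 0 <= vnorm x.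
Proof. pose proof (normD x (vopp x)) as T. rewrite addrN, norm0, normN in T. lra. Qed.

Lemma norm_le0 (x : V) : vnorm x <= 0 -> x = vzero.
Proof. intro; apply norm_eq0; pose proof (norm_ge0 x); lra. Qed.
End VectorAlgebra.

#[export] Instance prod_NormedVS (X Y : NormedData) `{NormedVS X} `{NormedVS Y} :
  NormedVS (prodData X Y).
Proof.
  constructor; intros; destruct_all (prod (car X) (car Y)); simpl in *.
  - rewrite !addA; auto.
  - rewrite addC, (addC (snd x)); auto.
  - rewrite !addr0; destruct x; auto.
  - rewrite !addrN; auto.
  - rewrite !scal1; destruct x; auto.
  - rewrite !scalDl; auto.
  - rewrite !scalM; auto.
  - rewrite !scalDr; auto.
  - destruct x as [a b]; simpl in *.
    pose proof (Rmax_l (vnorm a) (vnorm b)); pose proof (Rmax_r (vnorm a) (vnorm b)).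
    pose proof (norm_ge0 a); pose proof (norm_ge0 b).
    rewrite (norm_le0 a), (norm_le0 b); auto; lra.
  - rewrite !normZ. apply RmaxRmult, sqrt_pos.
  - pose proof (normD (fst x) (fst y)); pose proof (normD (snd x) (snd y)).
    pose proof (Rmax_l (vnorm (fst x)) (vnorm (snd x))).
    pose proof (Rmax_r (vnorm (fst x)) (vnorm (snd x))).
    pose proof (Rmax_l (vnorm (fst y)) (vnorm (snd y))).
    pose proof (Rmax_r (vnorm (fst y)) (vnorm (snd y))).
    apply Rmax_lub; lra.
Qed.

Section Linear.
Context {V W : NormedData} `{NormedVS V} `{NormedVS W}.
Variable T : V -> W.
Hypothesis HT : bounded_linear T.

Lemma lin0 : T vzero = vzero.
Proof. destruct HT as [HD _]. apply (addI (T vzero)). rewrite <- HD, !addr0; auto. Qed.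

Lemma linD (x y : V) : T (vadd x y) = vadd (T x) (T y).
Proof. destruct HT as [HD _]; auto. Qed.

Lemma linB (x y : V) : T (vsub x y) = vsub (T x) (T y).
Proof.
  unfold vsub. rewrite linD. f_equal. apply opp_unique. rewrite <- linD, addrN. apply lin0.
Qed.

Lemma lin_bound : exists M, 0 <= M /\ forall x, vnorm (T x) <= M * vnorm x.
Proof.
  destruct HT as (_ & _ & M & HM). exists (Rmax M 0). split; [apply Rmax_r|].
  intro x. eapply Rle_trans; [apply HM|].
  apply Rmult_le_compat_r; [apply norm_ge0|apply Rmax_l].
Qed.
End Linear.

Section LinearClosure.
Context {V W Z : NormedData} `{NormedVS V} `{NormedVS W} `{NormedVS Z}.

Lemma bl_comp (T : W -> Z) (S : V -> W) :
  bounded_linear T -> bounded_linear S -> bounded_linear (fun v => T (S v)).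
Proof.
  intros HT HS. destruct (lin_bound T HT) as (M1 & HM1 & B1).
  destruct (lin_bound S HS) as (M2 & HM2 & B2).
  destruct HT as (T1 & T2 & _), HS as (S1 & S2 & _).
  split; [|split]; intros.
  - rewrite S1, T1; auto.
  - rewrite S2, T2; auto.
  - exists (M1 * M2). intro x. eapply Rle_trans; [apply B1|].
    rewrite Rmult_assoc. apply Rmult_le_compat_l; auto.
Qed.

Lemma bl_add (T S : V -> W) :
  bounded_linear T -> bounded_linear S -> bounded_linear (fun v => vadd (T v) (S v)).
Proof.
  intros HT HS. destruct (lin_bound T HT) as (M1 & HM1 & B1).
  destruct (lin_bound S HS) as (M2 & HM2 & B2).
  destruct HT as (T1 & T2 & _), HS as (S1 & S2 & _).
  split; [|split]; intros.
  - rewrite S1, T1, <- !addA. f_equal. apply addCA.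
  - rewrite S2, T2, scalDr; auto.
  - exists (M1 + M2). intro x. eapply Rle_trans; [apply normD|].
    specialize (B1 x); specialize (B2 x). lra.
Qed.

Lemma bl_sub (T S : V -> W) :
  bounded_linear T -> bounded_linear S -> bounded_linear (fun v => vsub (T v) (S v)).
Proof.
  intros HT HS. apply bl_add; auto.
  destruct (lin_bound S HS) as (M & HM & B). destruct HS as (S1 & S2 & _).
  split; [|split]; intros.
  - rewrite S1, oppD; auto.
  - rewrite S2, <- !scalN1, <- !scalM. f_equal. unfold Cmul; simpl. f_equal; ring.
  - exists M. intro x. rewrite normN; auto.
Qed.

Lemma bl_id : bounded_linear (fun v : V => v).
Proof. split; [|split]; auto. exists 1; intros; lra. Qed.

Lemma bl_zero : bounded_linear (fun _ : V => (vzero : W)).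
Proof.
  split; [|split]; intros.
  - rewrite addr0; auto.
  - apply (addI (vscal a (vzero : W))). rewrite <- scalDr, !addr0; auto.
  - exists 0. intros. rewrite norm0. lra.
Qed.

Lemma bl_pair (F : Z -> V) (G : Z -> W) :
  bounded_linear F -> bounded_linear G -> bounded_linear (fun z => ((F z, G z) : prodData V W)).
Proof.
  intros HF HG. destruct (lin_bound F HF) as (M1 & HM1 & B1).
  destruct (lin_bound G HG) as (M2 & HM2 & B2).
  destruct HF as (F1 & F2 & _), HG as (G1 & G2 & _).
  split; [|split]; intros; simpl.
  - rewrite F1, G1; auto.
  - rewrite F2, G2; auto.
  - exists (M1 + M2). intro x. pose proof (norm_ge0 x).
    specialize (B1 x); specialize (B2 x). apply Rmax_lub; nra.
Qed.

Lemma bl_fst : bounded_linear (fun p : prodData V W => fst p).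
Proof.
  split; [|split]; intros; simpl; auto. exists 1. intros [a b]; simpl.
  pose proof (Rmax_l (vnorm a) (vnorm b)); lra.
Qed.

Lemma bl_snd : bounded_linear (fun p : prodData V W => snd p).
Proof.
  split; [|split]; intros; simpl; auto. exists 1. intros [a b]; simpl.
  pose proof (Rmax_r (vnorm a) (vnorm b)); lra.
Qed.
End LinearClosure.

Lemma bl_iter {V : NormedData} `{NormedVS V} (T : V -> V) (n : nat) :
  bounded_linear T -> bounded_linear (fun v => Nat.iter n T v).
Proof.
  intro HT. induction n; simpl; [apply bl_id|]. apply (bl_comp T (fun v => Nat.iter n T v)); auto.
Qed.

Ltac bounded_linear_tac := repeat match goal with
 | |- bounded_linear (fun v => v) => apply bl_id
 | |- bounded_linear (fun v => vzero) => apply bl_zero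
 | |- bounded_linear (fun v => vadd _ _) => apply bl_add
 | |- bounded_linear (fun v => vsub _ _) => apply bl_sub
 | |- bounded_linear (fun v => (_, _)) => apply bl_pair
 | |- bounded_linear (fun v => fst v) => apply bl_fst
 | |- bounded_linear (fun v => snd v) => apply bl_snd
 | |- bounded_linear fst => apply bl_fst
 | |- bounded_linear snd => apply bl_snd
 | |- bounded_linear (fun v => ?f (@?g v)) => apply (bl_comp f g)
 | |- bounded_linear ?f => assumption
 end.

Lemma iter_bound {V : NormedData} `{NormedVS V} (T : V -> V) (M : R) : 0 <= M ->
  (forall v, vnorm (T v) <= M * vnorm v) -> forall n v, vnorm (Nat.iter n T v) <= M ^ n * vnorm v.
Proof.
  intros HM B. induction n; intro v; simpl; [lra|].
  eapply Rle_trans; [apply B|]. rewrite Rmult_assoc. apply Rmult_le_compat_l; auto.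
Qed.

(* Uniform sub-geometric decay of the powers of T; for bounded operators this
   is equivalent to quasinilpotence (proved further below). *)
Definition subgeometric {V : NormedData} (T : V -> V) : Prop :=
  forall eps, eps > 0 -> exists K, 0 <= K /\
    forall n v, vnorm (Nat.iter n T v) <= K * eps ^ n * vnorm v.

Lemma subgeometric_ext {V : NormedData} (T S : V -> V) :
  (forall v, S v = T v) -> subgeometric T -> subgeometric S.
Proof. intros E HT. replace S with T; auto. apply functional_extensionality; auto. Qed.

Lemma pow_div_mult (M eps : R) (n : nat) : eps > 0 -> M ^ n = (M / eps) ^ n * eps ^ n.
Proof. intro. rewrite <- Rpow_mult_distr. f_equal. field. lra. Qed.

Section Decay.
Context {V : NormedData} `{NormedVS V}.

(* Decay only needs to be checked from some power k on (which may depend on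
   eps), since the first k powers are controlled by the norm of T. *)
Lemma subgeometric_of_tail (T : V -> V) (M : R) :
  0 <= M -> (forall v, vnorm (T v) <= M * vnorm v) ->
  (forall eps, eps > 0 -> exists k K, 0 <= K /\
     forall n v, vnorm (Nat.iter (k + n) T v) <= K * eps ^ n * vnorm v) ->
  subgeometric T.
Proof.
  intros HM BT Htail eps Heps. destruct (Htail eps Heps) as (k & K & HK & BK).
  set (m := M / eps). assert (Hm : 0 <= m) by (unfold m, Rdiv; apply Rmult_le_pos; auto with real).
  assert (Hek : eps ^ k > 0) by (apply pow_lt; lra).
  assert (HKk : 0 <= K / eps ^ k) by (unfold Rdiv; apply Rmult_le_pos; auto with real).
  assert (Hmk : 1 <= (1 + m) ^ k) by (apply pow_R1_Rle; lra).
  exists ((1 + m) ^ k + K / eps ^ k). split; [lra|].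
  intros n v. pose proof (norm_ge0 v). pose proof (pow_le eps n ltac:(lra)).
  destruct (Compare_dec.le_lt_dec k n) as [Hkn | Hnk].
  - replace n with (k + (n - k))%nat in * by lia.
    eapply Rle_trans; [apply BK|]. rewrite pow_add.
    replace (K * eps ^ (n - k)) with (K / eps ^ k * (eps ^ k * eps ^ (n - k))) by (field; lra).
    pose proof (pow_le eps (n - k) ltac:(lra)).
    apply Rmult_le_compat_r; auto. apply Rmult_le_compat_r; [nra|]. nra.
  - eapply Rle_trans; [apply (iter_bound T M HM BT)|]. apply Rmult_le_compat_r; auto.
    rewrite (pow_div_mult M eps n Heps). fold m. apply Rmult_le_compat_r; auto.
    apply (Rle_trans _ ((1 + m) ^ n)); [apply pow_incr; lra|].
    assert ((1 + m) ^ n <= (1 + m) ^ k) by (apply Rle_pow; [lra|lia]). lra.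
Qed.

(* If res = U Wm and res U = U T, then res^(n+1) = U T^n Wm inherits the decay
   of T. *)
Lemma subgeometric_intertwined {W : NormedData} `{NormedVS W}
  (res : V -> V) (U : W -> V) (T : W -> W) (Wm : V -> W) :
  (forall z, res (U z) = U (T z)) -> (forall p, res p = U (Wm p)) ->
  bounded_linear U -> bounded_linear Wm -> subgeometric T -> subgeometric res.
Proof.
  intros EU EW HU HW HT.
  destruct (lin_bound U HU) as (Mu & HMu & BU). destruct (lin_bound Wm HW) as (Mw & HMw & BW).
  assert (Hpow : forall n p, Nat.iter (1 + n) res p = U (Nat.iter n T (Wm p))).
  { induction n; intro p; simpl in *; auto. rewrite IHn, EU; auto. }
  apply (subgeometric_of_tail res (Mu * Mw)); [nra| |].
  { intro p. rewrite EW. eapply Rle_trans; [apply BU|].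
    rewrite Rmult_assoc. apply Rmult_le_compat_l; auto. }
  intros eps Heps. destruct (HT eps Heps) as (K & HK & BT).
  exists 1%nat, (Mu * K * Mw). split; [apply Rmult_le_pos; nra|]. intros n p.
  rewrite Hpow. eapply Rle_trans; [apply BU|].
  pose proof (BT n (Wm p)). pose proof (BW p). pose proof (pow_le eps n ltac:(lra)).
  replace (Mu * K * Mw * eps ^ n * vnorm p) with (Mu * (K * eps ^ n * (Mw * vnorm p))) by ring.
  apply Rmult_le_compat_l; auto. eapply Rle_trans; eauto. apply Rmult_le_compat_l; nra.
Qed.

Lemma iter_twice (T Q : V -> V) : (forall v, Q v = T (T v)) ->
  forall n v, Nat.iter n Q v = Nat.iter (n + n) T v.
Proof.
  intros E. induction n; intro v; simpl; auto.
  rewrite IHn, E, Nat.add_succ_r. auto.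
Qed.

Lemma subgeometric_square (T Q : V -> V) :
  (forall v, Q v = T (T v)) -> subgeometric T -> subgeometric Q.
Proof.
  intros E HT eps Heps. set (d := Rmin eps 1).
  assert (Hd : 0 < d) by (apply Rmin_pos; lra).
  assert (Hdd : d * d <= eps).
  { assert (d <= eps) by apply Rmin_l. assert (d <= 1) by apply Rmin_r. nra. }
  destruct (HT d Hd) as (K & HK & B). exists K; split; auto.
  intros n v. rewrite (iter_twice T Q E). eapply Rle_trans; [apply B|].
  apply Rmult_le_compat_r; [apply norm_ge0|]. apply Rmult_le_compat_l; auto.
  rewrite pow_add, <- Rpow_mult_distr. apply pow_incr. nra.
Qed.

Lemma subgeometric_of_square (T Q : V -> V) :
  bounded_linear T -> (forall v, Q v = T (T v)) -> subgeometric Q -> subgeometric T.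
Proof.
  intros HT E HS eps Heps. destruct (lin_bound T HT) as (M & HM & BT).
  destruct (HS (eps * eps) ltac:(nra)) as (K & HK & B).
  assert (Hm : 0 <= M / eps) by (unfold Rdiv; apply Rmult_le_pos; auto with real).
  exists (K * (1 + M / eps)). split; [nra|]. intros n v.
  pose proof (norm_ge0 v). destruct (Nat.Even_or_Odd n) as [[j ->] | [j ->]].
  - replace (2 * j)%nat with (j + j)%nat by lia. rewrite <- (iter_twice T Q E).
    eapply Rle_trans; [apply B|]. rewrite pow_add, <- Rpow_mult_distr.
    pose proof (pow_le (eps * eps) j ltac:(nra)).
    apply Rmult_le_compat_r; auto. apply Rmult_le_compat_r; auto.
    rewrite <- (Rmult_1_r K) at 1. apply Rmult_le_compat_l; lra.
  - replace (2 * j + 1)%nat with (S (j + j)) by lia. simpl. rewrite <- (iter_twice T Q E).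
    eapply Rle_trans; [apply BT|]. pose proof (B j v) as Bj.
    pose proof (pow_le (eps * eps) j ltac:(nra)). rewrite pow_add, <- Rpow_mult_distr.
    replace (K * (1 + M / eps) * (eps * (eps * eps) ^ j) * vnorm v)
      with (M * (K * (eps * eps) ^ j * vnorm v) + K * (eps * (eps * eps) ^ j) * vnorm v)
      by (field; lra).
    assert (0 <= K * (eps * (eps * eps) ^ j) * vnorm v)
      by (apply Rmult_le_pos; auto; apply Rmult_le_pos; nra).
    pose proof (Rmult_le_compat_l M _ _ HM Bj). lra.
Qed.

(* Powers of P + Q when P Q = 0 and Q^3 = 0: the Q's can only stand to the left. *)
Lemma iter_sum_nilpotent (P Q : V -> V) :
  bounded_linear P -> bounded_linear Q ->
  (forall v, P (Q v) = vzero) -> (forall v, Q (Q (Q v)) = vzero) ->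
  forall n v, Nat.iter (2 + n) (fun v => vadd (P v) (Q v)) v =
    vadd (vadd (Nat.iter (2 + n) P v) (Q (Nat.iter (1 + n) P v))) (Q (Q (Nat.iter n P v))).
Proof.
  intros HP HQ EPQ EQ3. induction n; intro v.
  - simpl. rewrite !(linD P HP), !(linD Q HQ), EPQ, addr0. apply addA.
  - change (Nat.iter (2 + S n) (fun v => vadd (P v) (Q v)) v)
      with (vadd (P (Nat.iter (2 + n) (fun v => vadd (P v) (Q v)) v))
                 (Q (Nat.iter (2 + n) (fun v => vadd (P v) (Q v)) v))).
    rewrite IHn, !(linD P HP), !(linD Q HQ), !EPQ, EQ3, !addr0. simpl. apply addA.
Qed.

Lemma subgeometric_nilpotent_perturbation (P Q : V -> V) :
  bounded_linear P -> bounded_linear Q -> subgeometric P ->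
  (forall v, P (Q v) = vzero) -> (forall v, Q (Q (Q v)) = vzero) ->
  subgeometric (fun v => vadd (P v) (Q v)).
Proof.
  intros HP HQ HG EPQ EQ3.
  destruct (lin_bound P HP) as (Mp & HMp & BP). destruct (lin_bound Q HQ) as (M & HM & BQ).
  apply (subgeometric_of_tail _ (Mp + M)); [lra| |].
  { intro v. eapply Rle_trans; [apply normD|]. specialize (BP v); specialize (BQ v). lra. }
  intros eps Heps. destruct (HG eps Heps) as (K & HK & B).
  exists 2%nat, (K * (eps * eps + M * eps + M * M)). split; [apply Rmult_le_pos; nra|].
  intros n v. rewrite (iter_sum_nilpotent P Q HP HQ EPQ EQ3).
  pose proof (B (2 + n)%nat v) as B2. pose proof (B (1 + n)%nat v) as B1. pose proof (B n v) as B0.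
  pose proof (BQ (Nat.iter (1 + n) P v)) as C1. pose proof (BQ (Q (Nat.iter n P v))) as C2.
  pose proof (BQ (Nat.iter n P v)) as C3.
  pose proof (normD (Nat.iter (2 + n) P v) (Q (Nat.iter (1 + n) P v))) as D1.
  pose proof (normD (vadd (Nat.iter (2 + n) P v) (Q (Nat.iter (1 + n) P v)))
                    (Q (Q (Nat.iter n P v)))) as D2.
  replace (2 + n)%nat with (S (S n)) in * by lia. replace (1 + n)%nat with (S n) in * by lia.
  simpl pow in B2, B1.
  assert (Ke : 0 <= K * eps ^ n * vnorm v)
    by (apply Rmult_le_pos; [apply Rmult_le_pos; [|apply pow_le]; lra | apply norm_ge0]).
  pose proof (Rmult_le_compat_l M _ _ HM B1). pose proof (Rmult_le_compat_l M _ _ HM C3).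
  pose proof (Rmult_le_compat_l M _ _ HM B0). nra.
Qed.

Lemma vanish_of_geometric_bounds (w : V) (M : R) : 0 <= M ->
  (forall e, e > 0 -> exists K, forall n, vnorm w <= K * (e * M) ^ n) -> w = vzero.
Proof.
  intros HM Hb. apply norm_le0.
  set (e := / (2 * (M + 1))). assert (He : 0 < e) by (apply Rinv_0_lt_compat; lra).
  assert (Hq : e * M < 1 / 2).
  { unfold e. apply (Rmult_lt_reg_l (2 * (M + 1))); [lra|].
    rewrite <- Rmult_assoc, Rinv_r by lra. lra. }
  destruct (Hb e He) as [K HK].
  destruct (Rle_lt_dec (vnorm w) 0) as [|Hw]; auto.
  destruct (Rle_lt_dec K 0) as [HK0|HK0]. { specialize (HK 0%nat); simpl in HK; lra. }
  destruct (pow_lt_1_zero (e * M) ltac:(rewrite Rabs_pos_eq; nra) (vnorm w / K)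
             ltac:(apply Rdiv_lt_0_compat; lra)) as [N HN].
  specialize (HN N (le_n _)). specialize (HK N).
  rewrite Rabs_pos_eq in HN by (apply pow_le; nra).
  apply (Rmult_lt_compat_l K) in HN; auto.
  replace (K * (vnorm w / K)) with (vnorm w) in HN by (field; lra). lra.
Qed.
End Decay.

Lemma nroot_lt_pow (o eps : R) (n : nat) : (0 < n)%nat -> eps > 0 ->
  nroot o n < eps -> o <= eps ^ n.
Proof.
  intros Hn Heps. unfold nroot. destruct (Rle_dec o 0) as [Ho|Ho].
  { intros _. pose proof (pow_le eps n ltac:(lra)). lra. }
  intro Hq. replace o with (Rpower o (/ INR n) ^ n).
  - apply pow_incr. split; [left; apply exp_pos|lra].
  - rewrite <- Rpower_pow by apply exp_pos. rewrite Rpower_mult, Rinv_l, Rpower_1; auto; [lra|].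
    apply not_0_INR. lia.
Qed.

Lemma nroot_le_of_bound (o c a : R) (n : nat) : (0 < n)%nat -> 0 < c -> 0 < a ->
  o <= c * a ^ n -> nroot o n <= Rpower c (/ INR n) * a.
Proof.
  intros Hn Hc Ha Ho. unfold nroot. destruct (Rle_dec o 0).
  { pose proof (exp_pos (/ INR n * ln c)). unfold Rpower. nra. }
  assert (Hn' : 0 < INR n) by (apply lt_0_INR; lia).
  eapply Rle_trans.
  { apply Rle_Rpower_l; [left; apply Rinv_0_lt_compat; auto | split; [lra | apply Ho]]. }
  rewrite <- Rpower_mult_distr by (auto; apply pow_lt; lra).
  rewrite <- Rpower_pow, Rpower_mult, Rinv_r, Rpower_1 by lra. lra.
Qed.

(* c^(1/n) tends to 1; we only need that it is eventually below 2. *)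
Lemma Rpower_inv_eventually_lt_2 (c : R) : 0 < c ->
  exists N, forall n, (N <= n)%nat -> Rpower c (/ INR n) < 2.
Proof.
  intro Hc. assert (Hl2 : 0 < ln 2) by (rewrite <- ln_1; apply ln_increasing; lra).
  destruct (INR_unbounded (Rabs (ln c) / ln 2)) as [N0 HN0].
  exists (S N0). intros n Hn.
  assert (HnN : INR N0 < INR n) by (apply lt_INR; lia).
  assert (Hn' : 0 < INR n) by (pose proof (pos_INR N0); lra).
  unfold Rpower. rewrite <- (exp_ln 2) by lra. apply exp_increasing.
  assert (Rabs (ln c) < ln 2 * INR n).
  { apply (Rmult_lt_compat_l (ln 2)) in HN0; auto.
    replace (ln 2 * (Rabs (ln c) / ln 2)) with (Rabs (ln c)) in HN0 by (field; lra). nra. }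
  pose proof (Rle_abs (ln c)).
  apply (Rmult_lt_reg_l (INR n)); auto. rewrite <- Rmult_assoc, Rinv_r by lra. lra.
Qed.

Section OperatorNorm.
Context {V : NormedData} `{NormedVS V}.
Variable T : V -> V.
Hypothesis HT : bounded_linear T.

(* For bounded T the supremum defining opnorm exists, so opnorm picks it. *)
Lemma opnorm_is_lub :
  is_lub (fun r => exists v : V, vnorm v <= 1 /\ r = vnorm (T v)) (opnorm T).
Proof.
  unfold opnorm. apply epsilon_spec.
  destruct (lin_bound T HT) as (M & HM & B).
  destruct (completeness (fun r => exists v : V, vnorm v <= 1 /\ r = vnorm (T v))) as [m Hm];
    [| |exists m; exact Hm].
  - exists M. intros r (v & Hv & ->). eapply Rle_trans; [apply B|].
    pose proof (norm_ge0 v). nra.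
  - exists (vnorm (T vzero)), vzero. rewrite norm0. split; [lra|auto].
Qed.

Lemma opnorm_le (K : R) : 0 <= K -> (forall v, vnorm (T v) <= K * vnorm v) -> opnorm T <= K.
Proof.
  intros HK Hb. apply opnorm_is_lub. intros r (v & Hv & ->).
  eapply Rle_trans; [apply Hb|]. pose proof (norm_ge0 v). nra.
Qed.

(* Rescale v to norm 1 and use that opnorm T bounds the image of the unit ball. *)
Lemma opnorm_bound (v : V) : vnorm (T v) <= opnorm T * vnorm v.
Proof.
  pose proof (norm_ge0 v). destruct (Req_dec (vnorm v) 0) as [E|E].
  { rewrite (norm_eq0 v E), (lin0 T HT), norm0. lra. }
  set (n := vnorm v) in *.
  assert (Cm : Cmod (/ n, 0) = / n).
  { unfold Cmod; simpl. rewrite Rmult_0_r, Rplus_0_r. apply sqrt_square.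
    left; apply Rinv_0_lt_compat; lra. }
  assert (Hu : vnorm (T (vscal (/ n, 0) v)) <= opnorm T).
  { apply opnorm_is_lub. exists (vscal (/ n, 0) v). split; auto.
    rewrite normZ, Cm. unfold n. right. field. auto. }
  destruct HT as (_ & Hs & _). rewrite Hs, normZ, Cm in Hu.
  apply (Rmult_le_compat_r n) in Hu; [|lra].
  replace (/ n * vnorm (T v) * n) with (vnorm (T v)) in Hu by (field; lra). lra.
Qed.
End OperatorNorm.

Section QuasinilpotentDecay.
Context {V : NormedData} `{NormedVS V}.

Lemma quasinilpotent_subgeometric (T : V -> V) :
  bounded_linear T -> quasinilpotent T -> subgeometric T.
Proof.
  intros HT HQ. destruct (lin_bound T HT) as (M & HM & B).
  apply (subgeometric_of_tail T M); auto.
  intros eps Heps. destruct (HQ eps Heps) as [N HN].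
  exists (S N), (eps ^ S N). split; [apply pow_le; lra|]. intros n v.
  rewrite <- pow_add. eapply Rle_trans; [apply (opnorm_bound _ (bl_iter T _ HT))|].
  apply Rmult_le_compat_r; [apply norm_ge0|].
  apply nroot_lt_pow; [lia|auto|]. specialize (HN (S N + n)%nat ltac:(lia)).
  unfold R_dist in HN. rewrite Rminus_0_r in HN. eapply Rle_lt_trans; [apply Rle_abs|apply HN].
Qed.

Lemma subgeometric_quasinilpotent (T : V -> V) :
  bounded_linear T -> subgeometric T -> quasinilpotent T.
Proof.
  intros HT HG eps Heps. destruct (HG (eps / 2) ltac:(lra)) as (K & HK & B).
  destruct (Rpower_inv_eventually_lt_2 (K + 1) ltac:(lra)) as [N HN].
  exists (S N). intros n Hn. unfold R_dist. rewrite Rminus_0_r.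
  assert (Hr : 0 <= nroot (opnorm (fun v => Nat.iter n T v)) n).
  { unfold nroot. destruct (Rle_dec _ 0); [lra|left; apply exp_pos]. }
  rewrite Rabs_pos_eq by auto.
  eapply Rle_lt_trans.
  { apply (nroot_le_of_bound _ (K + 1) (eps / 2)); [lia|lra|lra|].
    apply opnorm_le; [apply bl_iter; auto|apply Rmult_le_pos; [lra|apply pow_le; lra]|].
    intro v. eapply Rle_trans; [apply B|]. apply Rmult_le_compat_r; [apply norm_ge0|].
    apply Rmult_le_compat_r; [apply pow_le; lra|lra]. }
  specialize (HN n ltac:(lia)). nra.
Qed.
End QuasinilpotentDecay.

(* For a candidate inverse x of a: the residue a - a^2 x, which must be
   quasinilpotent, and the complementary projection 1 - a x. *)
Definition residue {V : NormedData} (a x : V -> V) (v : V) : V := vsub (a v) (a (a (x v))).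
Definition coproj {V : NormedData} (a x : V -> V) (v : V) : V := vsub v (a (x v)).

Definition gdrazin_inverse {V : NormedData} (a x : V -> V) : Prop :=
  bounded_linear x /\ (forall v, x (a (x v)) = x v) /\ (forall v, a (x v) = x (a v)) /\
  subgeometric (residue a x).

Lemma gdrazin_inverse_ext {V : NormedData} (a b x : V -> V) :
  (forall v, a v = b v) -> gdrazin_inverse a x -> gdrazin_inverse b x.
Proof. intros E Hx. replace b with a; auto. apply functional_extensionality; auto. Qed.

Section Conversion.
Context {V : NormedData} `{NormedVS V}.
Variable a : V -> V.
Hypothesis Ha : bounded_linear a.

Lemma bl_residue (x : V -> V) : bounded_linear x -> bounded_linear (residue a x).
Proof. intro Hx. unfold residue. bounded_linear_tac. Qed.

Lemma has_gDrazin_inverse : has_gDrazin a -> exists x, gdrazin_inverse a x.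
Proof.
  intros (x & Hx & E1 & E2 & HQ). exists x.
  do 3 (split; auto). apply quasinilpotent_subgeometric; auto. apply bl_residue; auto.
Qed.

Lemma gdrazin_inverse_has (x : V -> V) : gdrazin_inverse a x -> has_gDrazin a.
Proof.
  intros (Hx & E1 & E2 & HG). exists x.
  do 3 (split; auto). apply subgeometric_quasinilpotent; auto. apply bl_residue; auto.
Qed.
End Conversion.

(* With p = 1 - b x and r = b - b^2 x = b p, the identities
   r y x = r^(n+1) y x^(n+1) and x y r = x^(n+1) y r^(n+1) together with the
   decay of r force r y x = 0 and x y r = 0, i.e. y x = b x y x and
   x y = x y b x; both right-hand sides equal b x y x. *)
Section Commutation.
Context {V : NormedData} `{NormedVS V}.
Variables b x y : V -> V.
Hypotheses (Hb : bounded_linear b) (Hx : bounded_linear x) (Hy : bounded_linear y).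
Hypotheses (Exbx : forall v, x (b (x v)) = x v) (Ebx : forall v, b (x v) = x (b v)).
Hypothesis Hdecay : subgeometric (residue b x).
Hypothesis Eyb : forall v, y (b v) = b (y v).

Let r := residue b x.
Let p := coproj b x.

Lemma x_coproj (v : V) : x (p v) = vzero.
Proof. unfold p, coproj. rewrite (linB x Hx), Exbx. apply subrr. Qed.

Lemma residue_coproj (v : V) : r v = p (b v).
Proof. unfold r, p, residue, coproj. rewrite Ebx. auto. Qed.

Lemma b_coproj (v : V) : b (p v) = r v.
Proof. unfold p, r, coproj, residue. apply (linB b Hb). Qed.

Lemma residue_of_coproj (v : V) : r (p v) = r v.
Proof.
  unfold r at 1, residue. rewrite x_coproj, !(lin0 b Hb), subr0. apply b_coproj.
Qed.

Lemma b_x_x (v : V) : b (x (x v)) = x v.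
Proof. rewrite Ebx. apply Exbx. Qed.

Lemma x_residue (v : V) : x (r v) = vzero.
Proof. rewrite residue_coproj. apply x_coproj. Qed.

Lemma residue_y_x_x (v : V) : r (y (x (x v))) = p (y (x v)).
Proof. rewrite residue_coproj, <- Eyb, b_x_x. auto. Qed.

Lemma x_y_residue_step (v : V) : x (y (r v)) = x (x (y (r (r v)))).
Proof.
  rewrite <- (Exbx (y (r v))), Ebx, <- Eyb. do 3 f_equal.
  change (r (r v)) with (vsub (b (r v)) (b (b (x (r v))))).
  rewrite x_residue, !(lin0 b Hb), subr0. auto.
Qed.

Lemma residue_orbit_left (n : nat) (v : V) :
  r (y (x v)) = Nat.iter (S n) r (y (Nat.iter (S n) x v)).
Proof.
  revert v; induction n; intro v; auto. rewrite IHn.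
  change (Nat.iter (S n) x v) with (x (Nat.iter n x v)).
  change (Nat.iter (S (S n)) x v) with (x (x (Nat.iter n x v))).
  rewrite (Nat.iter_succ_r (S n) _ r), residue_y_x_x, !Nat.iter_succ_r, residue_of_coproj. auto.
Qed.

Lemma residue_orbit_right (n : nat) (v : V) :
  x (y (r v)) = Nat.iter (S n) x (y (Nat.iter (S n) r v)).
Proof.
  revert v; induction n; intro v; auto. rewrite IHn.
  change (Nat.iter (S n) r v) with (r (Nat.iter n r v)).
  change (Nat.iter (S (S n)) r v) with (r (r (Nat.iter n r v))).
  rewrite !Nat.iter_succ_r, x_y_residue_step. auto.
Qed.

(* Both orbits are bounded by K (e ||x||)^n, hence vanish. *)
Lemma residue_y_x (v : V) : r (y (x v)) = vzero.
Proof.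
  destruct (lin_bound x Hx) as (Mx & HMx & Bx). destruct (lin_bound y Hy) as (My & HMy & By).
  apply (vanish_of_geometric_bounds _ Mx HMx). intros e He.
  destruct (Hdecay e He) as (K & HK & BK). exists (K * e * Mx * My * vnorm v). intro n.
  rewrite (residue_orbit_left n v). eapply Rle_trans; [apply BK|].
  pose proof (iter_bound x Mx HMx Bx (S n) v). pose proof (By (Nat.iter (S n) x v)).
  pose proof (norm_ge0 (Nat.iter (S n) x v)). pose proof (pow_le e (S n) ltac:(lra)).
  assert (E : K * e * Mx * My * vnorm v * (e * Mx) ^ n = K * e ^ S n * (My * (Mx ^ S n * vnorm v)))
    by (simpl; rewrite Rpow_mult_distr; ring).
  rewrite E. apply Rmult_le_compat_l; [apply Rmult_le_pos; auto|].
  eapply Rle_trans; eauto. apply Rmult_le_compat_l; auto.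
Qed.

Lemma x_y_residue (v : V) : x (y (r v)) = vzero.
Proof.
  destruct (lin_bound x Hx) as (Mx & HMx & Bx). destruct (lin_bound y Hy) as (My & HMy & By).
  apply (vanish_of_geometric_bounds _ Mx HMx). intros e He.
  destruct (Hdecay e He) as (K & HK & BK). exists (K * e * Mx * My * vnorm v). intro n.
  rewrite (residue_orbit_right n v). eapply Rle_trans; [apply (iter_bound x Mx HMx Bx)|].
  pose proof (BK (S n) v). pose proof (By (Nat.iter (S n) r v)).
  pose proof (pow_le Mx (S n) HMx).
  assert (E : K * e * Mx * My * vnorm v * (e * Mx) ^ n = Mx ^ S n * (My * (K * e ^ S n * vnorm v)))
    by (simpl; rewrite Rpow_mult_distr; ring).
  rewrite E. apply Rmult_le_compat_l; auto.
  eapply Rle_trans; eauto. apply Rmult_le_compat_l; auto.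
Qed.

Theorem gdrazin_inverse_commutes (v : V) : y (x v) = x (y v).
Proof.
  assert (Eyx : y (x v) = b (x (y (x v)))).
  { pose proof (residue_y_x (x v)) as Z. rewrite residue_coproj, <- Eyb, b_x_x in Z.
    apply subr0_eq in Z. auto. }
  assert (Exyp : x (y (p v)) = vzero).
  { rewrite <- (Exbx (y (p v))), Ebx, <- Eyb, b_coproj, x_y_residue. apply (lin0 x Hx). }
  assert (Ey : y v = vadd (y (p v)) (y (b (x v)))).
  { rewrite <- (linD y Hy). f_equal. unfold p, coproj. symmetry. apply subrK. }
  rewrite Ey, (linD x Hx), Exyp, add0r, Eyx at 1. rewrite Ebx, Eyb. auto.
Qed.
End Commutation.

Section Constructions.
Context {V : NormedData} `{NormedVS V}.

(* x^2 is a g-Drazin inverse of a^2; the new residue is the square of the old. *)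
Lemma gdrazin_inverse_square (a x : V -> V) : bounded_linear a -> gdrazin_inverse a x ->
  gdrazin_inverse (fun v => a (a v)) (fun v => x (x v)).
Proof.
  intros Ha (Hx & Exax & Eax & HG).
  assert (Ex_res : forall v, x (residue a x v) = vzero).
  { intro v. unfold residue. rewrite (linB x Hx), Eax, Exax. apply subrr. }
  split; [bounded_linear_tac|]. split; [|split].
  - intro v. rewrite (Eax (x v)), !Exax. auto.
  - intro v. rewrite !Eax. auto.
  - apply (subgeometric_square (residue a x)); auto. intro v.
    change (residue a x (residue a x v))
      with (vsub (a (residue a x v)) (a (a (x (residue a x v))))).
    rewrite Ex_res, !(lin0 a Ha), subr0. unfold residue.
    rewrite !(linB a Ha), (Eax (x v)), Exax. auto.
Qed.

(* If P Q = 0 and Q^3 = 0, then D + Q D^2 + Q^2 D^3 is a g-Drazin inverse of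
   P + Q; its residue is the residue of P perturbed by an operator E with
   residue(P) E = 0 and E^3 = 0. *)
Lemma gdrazin_inverse_sum (P Q D : V -> V) :
  bounded_linear P -> bounded_linear Q -> gdrazin_inverse P D ->
  (forall v, P (Q v) = vzero) -> (forall v, Q (Q (Q v)) = vzero) ->
  gdrazin_inverse (fun v => vadd (P v) (Q v))
    (fun v => vadd (vadd (D v) (Q (D (D v)))) (Q (Q (D (D (D v)))))).
Proof.
  intros HP HQ (HD & EDPD & EPD & HG) EPQ EQ3.
  assert (EDQ : forall v, D (Q v) = vzero).
  { intro v. rewrite <- EDPD, EPD, EPQ, !(lin0 D HD). auto. }
  assert (EDDP : forall v, D (D (P v)) = D v) by (intro v; rewrite <- EPD; apply EDPD).
  set (x := fun v => vadd (vadd (D v) (Q (D (D v)))) (Q (Q (D (D (D v)))))).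
  assert (Hx : bounded_linear x) by (unfold x; bounded_linear_tac).
  assert (ExQ : forall v, x (Q v) = vzero).
  { intro v. unfold x. rewrite EDQ, !(lin0 D HD), !(lin0 Q HQ), !addr0. auto. }
  (* (P + Q) x = x (P + Q) = PD + QD + Q^2 D^2 *)
  set (W := fun v => vadd (P (D v)) (vadd (Q (D v)) (Q (Q (D (D v)))))).
  assert (E1 : forall v, vadd (P (x v)) (Q (x v)) = W v).
  { intro v. unfold x, W. rewrite !(linD P HP), !(linD Q HQ), !EPQ, EQ3, !addr0, addA. auto. }
  assert (E2 : forall v, x (vadd (P v) (Q v)) = W v).
  { intro v. rewrite (linD x Hx), ExQ, addr0. unfold x, W. rewrite EDDP, <- EPD, <- addA. auto. }
  split; auto. split; [|split].
  - intro v. rewrite E1. unfold W. rewrite !(linD x Hx), !ExQ, !addr0. unfold x. rewrite EDPD. auto.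
  - intro v. rewrite E1, E2. auto.
  - set (E := fun v => vsub (vsub (Q v) (Q (P (D v)))) (Q (Q (D v)))).
    assert (HE : bounded_linear E) by (unfold E; bounded_linear_tac).
    assert (EQ : forall v, E v = Q (vsub (vsub v (P (D v))) (Q (D v)))).
    { intro v. unfold E. rewrite !(linB Q HQ). auto. }
    assert (EEQ : forall v, E (Q v) = Q (Q v)).
    { intro v. unfold E. rewrite EDQ, (lin0 P HP), !(lin0 Q HQ), !subr0. auto. }
    apply (subgeometric_ext (fun v => vadd (residue P D v) (E v))).
    + intro v. unfold residue. rewrite E1. unfold W.
      rewrite !(linD P HP), !(linD Q HQ), !EPQ, EQ3, !addr0, sub_regroup. auto.
    + apply subgeometric_nilpotent_perturbation; auto.
      * apply bl_residue; auto.
      * intro v. rewrite EQ. unfold residue. rewrite EPQ, EDQ, !(lin0 P HP). apply subrr.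
      * intro v. rewrite (EQ v), !EEQ, EQ3. auto.
Qed.

(* If e is a g-Drazin inverse of a^2, then a e is one of a: e commutes with a
   by gdrazin_inverse_commutes, and the residue of a squares to that of a^2. *)
Lemma gdrazin_inverse_of_square (a e : V -> V) : bounded_linear a ->
  gdrazin_inverse (fun v => a (a v)) e -> gdrazin_inverse a (fun v => a (e v)).
Proof.
  intros Ha Hw. pose proof Hw as (He & Ee & Ec & HG). cbv beta in Ee, Ec.
  assert (Eae : forall v, a (e v) = e (a v)).
  { apply (gdrazin_inverse_commutes (fun v => a (a v)) e a); auto; bounded_linear_tac. }
  split; [bounded_linear_tac|]. split; [|split].
  - intro v. rewrite Ee. auto.
  - intro v. rewrite Eae. auto.
  - set (p := coproj (fun v => a (a v)) e).
    assert (Eep : forall v, e (p v) = vzero).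
    { intro v. unfold p, coproj. rewrite (linB e He), Ee. apply subrr. }
    assert (Epa : forall v, p (a v) = a (p v)).
    { intro v. unfold p, coproj. rewrite (linB a Ha), (Eae v). auto. }
    assert (Ep : forall v, p (p v) = p v).
    { intro v. unfold p at 1, coproj. rewrite Eep, !(lin0 a Ha), subr0. auto. }
    assert (Eres : forall v, residue a (fun v => a (e v)) v = a (p v)).
    { intro v. unfold residue, p, coproj. rewrite (linB a Ha). auto. }
    apply (subgeometric_of_square _ (residue (fun v => a (a v)) e)).
    + apply bl_residue; bounded_linear_tac.
    + intro v. rewrite !Eres, Epa, Ep. unfold p, coproj, residue. rewrite !(linB a Ha). auto.
    + auto.
Qed.
End Constructions.

Lemma vsub_pair {V W : NormedData} (a c : V) (b d : W) :
  vsub ((a, b) : prodData V W) (c, d) = (vsub a c, vsub b d).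
Proof. reflexivity. Qed.

Section MatrixConstructions.
Context {V W : NormedData} `{NormedVS V} `{NormedVS W}.

(* The lower triangular matrix [[S, 0], [Am, 0]] on V (+) W has the g-Drazin
   inverse [[D, 0], [Am D^2, 0]]; its residue factors through the residue of S. *)
Lemma gdrazin_inverse_triangular (S D : V -> V) (Am : V -> W) :
  bounded_linear S -> bounded_linear Am -> gdrazin_inverse S D ->
  gdrazin_inverse (fun p : prodData V W => ((S (fst p), Am (fst p)) : prodData V W))
                  (fun p : prodData V W => ((D (fst p), Am (D (D (fst p)))) : prodData V W)).
Proof.
  intros HS HA (HD & EDSD & ESD & HG).
  assert (EDDS : forall v, D (D (S v)) = D v) by (intro v; rewrite <- ESD; apply EDSD).
  split; [bounded_linear_tac|]. split; [|split].
  - intros [u w]; simpl. rewrite EDSD. auto.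
  - intros [u w]; simpl. rewrite ESD, EDDS. auto.
  - apply (subgeometric_intertwined _
             (fun z => ((residue S D z, Am (coproj S D z)) : prodData V W))
             (residue S D) (fun p : prodData V W => fst p)).
    + intro z. unfold residue at 1. cbn [fst snd]. rewrite vsub_pair.
      unfold coproj. rewrite (linB Am HA). auto.
    + intros [u w]. unfold residue at 1. cbn [fst snd]. rewrite vsub_pair.
      unfold coproj. rewrite (linB Am HA). auto.
    + unfold residue, coproj. bounded_linear_tac.
    + apply bl_fst.
    + auto.
Qed.

Lemma gdrazin_inverse_cline (U : W -> V) (Vm : V -> W) (y : W -> W) :
  bounded_linear U -> bounded_linear Vm -> gdrazin_inverse (fun z => Vm (U z)) y ->
  gdrazin_inverse (fun v => U (Vm v)) (fun v => U (y (y (Vm v)))).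
Proof.
  intros HU HV (Hy & EyNy & ENy & HG).
  assert (EN2y : forall z, Vm (U (Vm (U (y (y z))))) = Vm (U (y z))).
  { intro z. rewrite (ENy (y z)), EyNy. auto. }
  split; [bounded_linear_tac|]. split; [|split].
  - intro v. rewrite EN2y, EyNy. auto.
  - intro v. rewrite !ENy. auto.
  - apply (subgeometric_intertwined _ U (residue (fun z => Vm (U z)) y)
             (fun v => vsub (Vm v) (Vm (U (y (Vm v)))))); auto.
    + intro z. unfold residue. rewrite EN2y, <- ENy, (linB U HU). auto.
    + intro v. unfold residue. rewrite EN2y, (linB U HU). auto.
    + bounded_linear_tac.
Qed.
End MatrixConstructions.

(* The companion matrix N = [[A, K], [1, 0]] on V (+) V with A K = 0 and
   K^3 = 0 has a g-Drazin inverse whenever A has one: N^2 is the triangular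
   matrix [[A^2 + K, 0], [A, 0]] perturbed by [[0, 0], [0, K]]. *)
Lemma gdrazin_inverse_companion {V : NormedData} `{NormedVS V} (A K D : V -> V) :
  bounded_linear A -> bounded_linear K -> gdrazin_inverse A D ->
  (forall v, A (K v) = vzero) -> (forall v, K (K (K v)) = vzero) ->
  exists x, gdrazin_inverse
    (fun p : prodData V V => ((vadd (A (fst p)) (K (snd p)), fst p) : prodData V V)) x.
Proof.
  intros HA HK HD EAK EK3.
  set (S := fun v => vadd (A (A v)) (K v)).
  set (T := fun p : prodData V V => ((S (fst p), A (fst p)) : prodData V V)).
  set (Q := fun p : prodData V V => ((vzero, K (snd p)) : prodData V V)).
  set (N := fun p : prodData V V => ((vadd (A (fst p)) (K (snd p)), fst p) : prodData V V)).
  assert (HN : bounded_linear N) by (unfold N; bounded_linear_tac).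
  assert (HS : bounded_linear S) by (unfold S; bounded_linear_tac).
  assert (HQ : bounded_linear Q) by (unfold Q; bounded_linear_tac).
  assert (HDS : exists DS, gdrazin_inverse S DS).
  { eexists. apply gdrazin_inverse_sum; [bounded_linear_tac|auto| |auto|auto].
    - apply gdrazin_inverse_square; eauto.
    - intro v. rewrite EAK. apply (lin0 A HA). }
  destruct HDS as [DS HDS].
  assert (HT : exists DT, gdrazin_inverse T DT)
    by (eexists; apply gdrazin_inverse_triangular; eauto).
  destruct HT as [DT HT].
  assert (HN2 : exists e, gdrazin_inverse (fun p => N (N p)) e).
  { eexists. eapply gdrazin_inverse_ext; [|apply (gdrazin_inverse_sum T Q DT)]; auto.
    - intros [u w]. unfold T, Q, N, S; simpl. rewrite (linD A HA), EAK, !addr0. auto.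
    - unfold T; bounded_linear_tac.
    - intros [u w]. unfold T, Q; simpl. rewrite (lin0 S HS), (lin0 A HA). auto.
    - intros [u w]. unfold Q; simpl. rewrite EK3. auto. }
  destruct HN2 as [e HN2].
  eexists. apply (gdrazin_inverse_of_square N e HN HN2).
Qed.

(* M = [[A, B], [C, 0]] factors as M = U Vm with
   U(u, w) = (u, C w) and Vm(u, y) = (A u + B y, u); Vm U is the companion
   matrix of A and K = B C, where A K = 0 and K^3 = B (C B C B) C = 0.
   Cline's formula transfers its g-Drazin inverse to M. *)
Theorem lemma3p7 (X Y : CBanach) (A : X -> X) (B : Y -> X) (C : X -> Y) :
  bounded_linear A -> bounded_linear B -> bounded_linear C ->
  has_gDrazin A ->
  (forall x : X, A (B (C x)) = vzero) ->
  (forall y : Y, C (B (C (B y))) = vzero) ->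
  has_gDrazin (opmatrix A B C).
Proof.
  intros HA HB HC HgA EABC ECBCB.
  destruct (has_gDrazin_inverse A HA HgA) as [D HD].
  assert (HK : bounded_linear (fun v => B (C v))) by bounded_linear_tac.
  assert (EK3 : forall v, B (C (B (C (B (C v))))) = vzero)
    by (intro v; rewrite ECBCB; apply (lin0 B HB)).
  destruct (gdrazin_inverse_companion A _ D HA HK HD EABC EK3) as [y Hy].
  set (U := fun p : prodData X X => ((fst p, C (snd p)) : prodData X Y)).
  set (Vm := fun q : prodData X Y => ((vadd (A (fst q)) (B (snd q)), fst q) : prodData X X)).
  assert (HU : bounded_linear U) by (unfold U; bounded_linear_tac).
  assert (HV : bounded_linear Vm) by (unfold Vm; bounded_linear_tac).
  exact (gdrazin_inverse_has _ (bl_comp U Vm HU HV) _ (gdrazin_inverse_cline U Vm y HU HV Hy)).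
Qed.
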